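(* Let $\{|j\rangle\}_{j=1}^n$ be a fixed orthonormal (reference) basis of an $n$-dimensional Hilbert space, and let $Z_1,\dots,Z_n$ be Hermitian operators, all diagonal in the reference basis, with $\operatorname{tr}Z_jZ_k=\delta_{jk}$. For a state $\rho$, define \[ \mathcal{C}(\rho):=\min_{\{p_l,|\psi_l\rangle\}}\sum_lp_l\,\mathcal{F}_1\Big(e^{i\sum_j\theta_jZ_j}|\psi_l\rangle\langle\psi_l|e^{-i\sum_j\theta_jZ_j}\Big), \] where the minimum is over all ensemble decompositions $\rho=\sum_lp_l|\psi_l\rangle\langle\psi_l|$. Then \[ \mathcal{C}(\rho)=\frac4n\Big(1-\max_{\{p_l,|\psi_l\rangle\}}\sum_lp_l\sum_{j=1}^n|\langle j|\psi_l\rangle|^4\Big), \] with the maximum again over all ensemble decompositions of $\rho$.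
   Context: For a parametric family $\varrho_\theta$, $\theta\in\mathbb{R}^n$, the arithmetic-mean QFI is $\mathcal{F}_1(\varrho_\theta):=\frac1n\operatorname{tr}F(\varrho_\theta)$, where $F$ is the SLD-based QFI matrix $[F]_{jk}=\operatorname{Re}\operatorname{tr}(L_jL_k\varrho_\theta)$, with Hermitian $L_j$ satisfying $\partial_j\varrho_\theta=(L_j\varrho_\theta+\varrho_\theta L_j)/2$. (For the unitary families above, $F$ does not depend on $\theta$.) *)

From mathcomp Require Import all_boot all_order all_algebra.
From mathcomp Require Import boolp classical_sets reals topology normedtype derive trigo.
From mathcomp Require Import complex.
Set Implicit Arguments. Unset Strict Implicit. Unset Printing Implicit Defensive.
Import Order.TTheory GRing.Theory Num.Theory.
Import numFieldNormedType.Exports.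
Local Open Scope ring_scope.

Section QFI.
Variable R : realType.
Local Notation C := R[i].

Definition adjm (m k : nat) (A : 'M[C]_(m, k)) : 'M[C]_(k, m) :=
  map_mx (fun x : C => x^*) A^T.

Definition herm_mx (n : nat) (A : 'M[C]_n) : Prop := adjm A = A.

Definition is_state (n : nat) (rho : 'M[C]_n) : Prop :=
  [/\ herm_mx rho,
      (forall v : 'cV[C]_n, 0 <= (adjm v *m rho *m v) 0 0) &
      \tr rho = 1].

Definition ensemble (n : nat) (rho : 'M[C]_n) (m : nat)
    (p : 'I_m -> R) (psi : 'I_m -> 'cV[C]_n) : Prop :=
  [/\ (forall l, 0 <= p l), \sum_(l < m) p l = 1,
      (forall l, adjm (psi l) *m psi l = 1%:M) &
      rho = \sum_(l < m) ((p l)%:C)%C *: (psi l *m adjm (psi l))].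

Definition phase (x : R) : C := (cos x +i* sin x)%C.

(* e^{i sum_j theta_j Z_j} for Z_j Hermitian and diagonal in the reference
   basis: the diagonal matrix with entries e^{i sum_j theta_j (Z_j)_{kk}}
   (the diagonal entries are real, we take their real parts) *)
Definition Uth (n : nat) (Z : 'I_n -> 'M[C]_n) (theta : 'I_n -> R) : 'M[C]_n :=
  diag_mx (\row_k phase (\sum_(j < n) theta j * complex.Re (Z j k k))).

Definition family (n : nat) (Z : 'I_n -> 'M[C]_n) (psi : 'cV[C]_n)
    (theta : 'I_n -> R) : 'M[C]_n :=
  Uth Z theta *m (psi *m adjm psi) *m adjm (Uth Z theta).

Definition shift (n : nat) (theta : 'I_n -> R) (j : 'I_n) (t : R) : 'I_n -> R :=
  fun k => theta k + (if k == j then t else 0).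

Definition is_pderiv (n : nat) (fam : ('I_n -> R) -> 'M[C]_n)
    (theta : 'I_n -> R) (j : 'I_n) (D : 'M[C]_n) : Prop :=
  forall a b,
    is_derive (0 : R) (1 : R) (fun t => complex.Re (fam (shift theta j t) a b))
      (complex.Re (D a b)) /\
    is_derive (0 : R) (1 : R) (fun t => complex.Im (fam (shift theta j t) a b))
      (complex.Im (D a b)).

Definition is_SLD (n : nat) (fam : ('I_n -> R) -> 'M[C]_n)
    (theta : 'I_n -> R) (j : 'I_n) (L : 'M[C]_n) : Prop :=
  herm_mx L /\
  exists D, is_pderiv fam theta j D /\
            D = (2%:R : C)^-1 *: (L *m fam theta + fam theta *m L).

Definition qfi_matrix (n : nat) (fam : ('I_n -> R) -> 'M[C]_n)
    (theta : 'I_n -> R) (L : 'I_n -> 'M[C]_n) : 'M[R]_n :=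
  \matrix_(j, k) complex.Re (\tr (L j *m L k *m fam theta)).

(* v is the arithmetic-mean QFI F_1 = (1/n) tr F of the family at theta *)
Definition mean_qfi_is (n : nat) (fam : ('I_n -> R) -> 'M[C]_n)
    (theta : 'I_n -> R) (v : R) : Prop :=
  exists L : 'I_n -> 'M[C]_n,
    (forall j, is_SLD fam theta j (L j)) /\
    v = \tr (qfi_matrix fam theta L) / n%:R.

Definition qfi_values (n : nat) (Z : 'I_n -> 'M[C]_n) (theta : 'I_n -> R)
    (rho : 'M[C]_n) : set R :=
  [set x | exists m (p : 'I_m -> R) (psi : 'I_m -> 'cV[C]_n),
     ensemble rho p psi /\
     exists v : 'I_m -> R,
       (forall l, mean_qfi_is (family Z (psi l)) theta (v l)) /\
       x = \sum_(l < m) p l * v l].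

Definition Ccoh (n : nat) (Z : 'I_n -> 'M[C]_n) (theta : 'I_n -> R)
    (rho : 'M[C]_n) : R := inf (qfi_values Z theta rho).

Definition abs2 (z : C) : R := complex.Re z ^+ 2 + complex.Im z ^+ 2.

Definition ipr_values (n : nat) (rho : 'M[C]_n) : set R :=
  [set x | exists m (p : 'I_m -> R) (psi : 'I_m -> 'cV[C]_n),
     ensemble rho p psi /\
     x = \sum_(l < m) p l * \sum_(j < n) abs2 (psi l j 0) ^+ 2].

End QFI.

(* For a unit vector psi, every SLD L of theta |-> U_theta |psi><psi| U_theta^dagger
   in the direction theta_j satisfies L phi = 2i (Z_j - <Z_j>) phi, where
   phi = U_theta psi, so tr (L^2 rho_theta) = 4 Var_phi (Z_j) whichever SLD is chosen.
   Since Z_j is diagonal, this is the variance of its real diagonal z_j under the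
   weights w_a = |<a|psi>|^2.  The trace condition makes the n vectors z_j
   orthonormal, so the square matrix (z_j(a)) is orthogonal, its columns are
   orthonormal too, and summing the variances over j gives
   sum_a w_a - sum_a w_a^2 = 1 - sum_a |<a|psi>|^4.  So every pure state
   contributes (4/n)(1 - sum_a |<a|psi>|^4); averaging over an ensemble commutes
   with this decreasing affine map, which turns the infimum over ensembles into
   (4/n)(1 - the supremum of the averaged sums).
   Ensembles exist by the spectral theorem. *)

From Pilot Require Import Defs.
From mathcomp Require Import all_boot all_order all_algebra.
From mathcomp Require Import boolp classical_sets reals topology normedtype derive trigo.
From mathcomp Require Import complex.
From mathcomp Require Import ring lra spectral.
Import Order.TTheory GRing.Theory Num.Theory.
Import numFieldNormedType.Exports.
Set Implicit Arguments.
Unset Strict Implicit.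
Unset Printing Implicit Defensive.
Local Open Scope ring_scope.

(* i[H, P]: the derivative of U_theta P U_theta^dagger along theta_j when H = Z_j. *)
Local Notation icomm H P := ('i%C *: (H *m P - P *m H)).

Section WeightedVariance.
Variable F : comUnitRingType.

Definition weighted_variance k (w f : 'I_k -> F) : F :=
  \sum_a f a ^+ 2 * w a - (\sum_a f a * w a) ^+ 2.

Lemma sum_weighted_variance_orthonormal k (f : 'I_k -> 'I_k -> F) (w : 'I_k -> F) :
  (forall j l, \sum_a f j a * f l a = (j == l)%:R) ->
  \sum_j weighted_variance w (f j) = \sum_a w a - \sum_a w a ^+ 2.
Proof.
move=> rows_orth; pose M := \matrix_(j, a) f j a.
have /mulmx1C MtM : M *m M^T = 1%:M.
  by apply/matrixP => j l; rewrite !mxE -rows_orth; apply: eq_bigr => a _; rewrite !mxE.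
have cols_orth a b : \sum_j f j a * f j b = (a == b)%:R.
  have /matrixP/(_ a b) := MtM; rewrite !mxE => <-.
  by apply: eq_bigr => j _; rewrite !mxE.
rewrite big_split /= sumrN; congr (_ - _).
  rewrite exchange_big; apply: eq_bigr => a _.
  by rewrite -mulr_suml (eq_bigr _ (fun j _ => expr2 (f j a))) cols_orth eqxx mul1r.
transitivity (\sum_j \sum_a \sum_b w a * w b * (f j a * f j b)).
  apply: eq_bigr => j _; rewrite expr2 mulr_suml; apply: eq_bigr => a _.
  by rewrite mulr_sumr; apply: eq_bigr => b _; ring.
rewrite exchange_big; apply: eq_bigr => a _; rewrite exchange_big /=.
under eq_bigr => b _ do rewrite -mulr_sumr cols_orth.
rewrite (bigD1 a) //= eqxx mulr1 big1 ?addr0 ?expr2 // => b ba.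
by rewrite eq_sym (negPf ba) mulr0.
Qed.

End WeightedVariance.

Section ComplexScalars.
Variable R : realType.
Local Notation C := R[i].

Lemma complex_ext (x y : C) :
  complex.Re x = complex.Re y -> complex.Im x = complex.Im y -> x = y.
Proof. by case: x y => a b [c d] /= -> ->. Qed.

Lemma phaseD x y : phase (x + y) = phase x * phase y :> C.
Proof. by apply: complex_ext; rewrite /phase /= ?cosD ?sinD; ring. Qed.

Lemma phaseJ x : (phase x)^* = phase (- x) :> C.
Proof. by apply: complex_ext; rewrite /phase /= ?cosN ?sinN. Qed.

Lemma phaseJ_mul x : (phase x)^* * phase x = 1 :> C.
Proof.
by rewrite phaseJ -phaseD addNr; apply: complex_ext; rewrite /phase /= ?cos0 ?sin0.
Qed.

(* Stated for the concrete maps: after a generic [rmorphM] the morphism stays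
   wrapped in its structure, and later rewrites no longer recognise it. *)
Lemma conjCM (x y : C) : (x * y)^* = x^* * y^*.
Proof. exact: rmorphM. Qed.

Lemma realCM (x y : R) : ((x * y)%:C)%C = (x%:C)%C * (y%:C)%C :> C.
Proof. exact: rmorphM. Qed.

Lemma realCB (x y : R) : ((x - y)%:C)%C = (x%:C)%C - (y%:C)%C :> C.
Proof. exact: rmorphB. Qed.

Lemma realC_sum I (r : seq I) (P : pred I) (f : I -> R) :
  ((\sum_(i <- r | P i) f i)%:C)%C = \sum_(i <- r | P i) ((f i)%:C)%C :> C.
Proof. exact: rmorph_sum. Qed.

Lemma conj_i : ('i%C : C)^* = - 'i%C.
Proof. by apply: complex_ext; rewrite /= ?oppr0. Qed.

Lemma abs2E (z : C) : ((abs2 z)%:C)%C = z^* * z.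
Proof. by case: z => a b; apply: complex_ext; rewrite /abs2 /=; ring. Qed.

Lemma abs2_ge0 (z : C) : 0 <= abs2 z.
Proof. by rewrite addr_ge0 ?sqr_ge0. Qed.

Lemma is_derive_phase_line (f : R -> C) (a b : R) (c : C) :
  (forall t, f t = phase (a + t * b) * c) ->
  let D := 'i%C * (b%:C)%C * phase a * c in
  is_derive (0 : R) 1 (fun t => complex.Re (f t)) (complex.Re D) /\
  is_derive (0 : R) 1 (fun t => complex.Im (f t)) (complex.Im D).
Proof.
move=> /funext ->; case: c => x y; rewrite /phase /=.
by split; apply: is_derive_eq;
  rewrite !(mul0r, addr0, add0r, mul1r, scaler0) /GRing.scale /=; ring.
Qed.

End ComplexScalars.

Section ConjugateTranspose.
Variable R : realType.
Local Notation C := R[i].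

Lemma adjmE m p (A : 'M[C]_(m, p)) i j : adjm A i j = (A j i)^*.
Proof. by rewrite !mxE. Qed.

Lemma adjmK m k (A : 'M[C]_(m, k)) : adjm (adjm A) = A.
Proof. exact: trmxCK. Qed.

Lemma adjmM m k p (A : 'M[C]_(m, k)) (B : 'M[C]_(k, p)) :
  adjm (A *m B) = adjm B *m adjm A.
Proof. by rewrite /adjm trmx_mul map_mxM. Qed.

Lemma adjmB m k (A B : 'M[C]_(m, k)) : adjm (A - B) = adjm A - adjm B.
Proof. by rewrite /adjm linearB map_mxB. Qed.

Lemma adjmZ m k (c : C) (A : 'M[C]_(m, k)) : adjm (c *: A) = c^* *: adjm A.
Proof. by rewrite /adjm linearZ map_mxZ. Qed.

Lemma adjm_diag k (d : 'rV[C]_k) : adjm (diag_mx d) = diag_mx (map_mx Num.conj d).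
Proof. by rewrite /adjm tr_diag_mx map_diag_mx. Qed.

Lemma herm_diag_mxE k (A : 'M[C]_k) :
  is_diag_mx A -> herm_mx A -> A = diag_mx (\row_a ((complex.Re (A a a))%:C)%C).
Proof.
move=> /is_diag_mxP Adiag /matrixP Aherm; apply/matrixP => a b; rewrite !mxE.
case: eqVneq => [<-|ab]; last by rewrite mulr0n Adiag.
move: (Aherm a a); rewrite !mxE mulr1n; case: (A a a) => x y [] /= Hy.
by apply: complex_ext => //=; lra.
Qed.

Lemma commutator_diag_entry k (d : 'rV[C]_k) (A : 'M[C]_k) a b :
  (diag_mx d *m A - A *m diag_mx d) a b = (d 0 a - d 0 b) * A a b.
Proof. by rewrite mul_diag_mx mul_mx_diag !mxE; ring. Qed.

End ConjugateTranspose.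

Section PureStateSLD.
Variable R : realType.
Local Notation C := R[i].
Variable k : nat.
Implicit Types (H L P : 'M[C]_k) (phi : 'cV[C]_k).

Lemma sld_commutator_herm H P :
  herm_mx H -> herm_mx P -> herm_mx ((2%:R : C) *: icomm H P).
Proof.
rewrite /herm_mx => Hh Ph.
by rewrite !adjmZ adjmB !adjmM Hh Ph conj_i conjC_nat scaleNr -scalerN opprB.
Qed.

Lemma sld_commutator_idem H P : P *m P = P ->
  icomm H P = (2%:R : C)^-1 *:
    (((2%:R : C) *: icomm H P) *m P + P *m ((2%:R : C) *: icomm H P)).
Proof.
move=> PP; rewrite -scalemxAl -scalemxAr -scalerDr scalerA mulVf ?pnatr_eq0 // scale1r.
rewrite -scalemxAl -scalemxAr -scalerDr !mulmxBl !mulmxBr -!mulmxA PP.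
by rewrite [P *m (P *m H)]mulmxA PP addrA subrK.
Qed.

Definition mx_expect (phi : 'cV[C]_k) (A : 'M[C]_k) : 'M[C]_1 :=
  adjm phi *m (A *m phi).

Section PureState.
Variables (phi : 'cV[C]_k) (H : 'M[C]_k).
Hypothesis phi_unit : adjm phi *m phi = 1%:M.
Local Notation P := (phi *m adjm phi).
Local Notation m := (mx_expect phi H).

Lemma sld_pure_apply L : icomm H P = (2%:R : C)^-1 *: (L *m P + P *m L) ->
  L *m phi = (2%:R * 'i%C) *: (H *m phi - phi *m m).
Proof.
have two_neq0 : (2%:R : C) != 0 by rewrite pnatr_eq0.
move=> sld; have anticomm : L *m P + P *m L = (2%:R : C) *: icomm H P.
  by rewrite sld scalerA divff // scale1r.
have /(congr1 (mulmx^~ phi)) := anticomm.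
rewrite mulmxDl -!scalemxAl mulmxBl -!mulmxA phi_unit !mulmx1 scalerA => Lphi.
suff evL : adjm phi *m (L *m phi) = 0 by rewrite /mx_expect -Lphi evL mulmx0 addr0.
(* Applying phi^dagger on the left makes the right-hand side vanish. *)
have /(congr1 (mulmx (adjm phi))) := Lphi.
rewrite mulmxDr -scalemxAr mulmxBr !mulmxA phi_unit !mul1mx subrr scaler0.
rewrite -mulmxA -mulr2n -scaler_nat => /eqP.
by rewrite scalemx_eq0 (negPf two_neq0) => /eqP.
Qed.

Lemma mx_expect_herm : herm_mx H -> adjm m = m.
Proof. by move=> Hh; rewrite /mx_expect !adjmM adjmK Hh mulmxA. Qed.

Lemma norm2_centered : herm_mx H ->
  adjm (H *m phi - phi *m m) *m (H *m phi - phi *m m) =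
    mx_expect phi (H *m H) - m *m m.
Proof.
move=> Hh; rewrite adjmB adjmM [adjm (phi *m _)]adjmM mx_expect_herm // Hh.
rewrite mulmxBl !mulmxBr.
have -> : adjm phi *m H *m (H *m phi) = mx_expect phi (H *m H).
  by rewrite /mx_expect !mulmxA.
have -> : adjm phi *m H *m (phi *m m) = m *m m by rewrite mulmxA -(mulmxA (adjm phi)).
have -> : m *m adjm phi *m (H *m phi) = m *m m by rewrite -mulmxA.
have -> : m *m adjm phi *m (phi *m m) = m *m m.
  by rewrite mulmxA -(mulmxA m) phi_unit mulmx1.
by rewrite subrr subr0.
Qed.

Lemma tr_sld_pure L : herm_mx H -> herm_mx L ->
  icomm H P = (2%:R : C)^-1 *: (L *m P + P *m L) ->
  \tr (L *m L *m P) = 4%:R * (mx_expect phi (H *m H) 0 0 - m 0 0 ^+ 2).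
Proof.
move=> Hh Lh /sld_pure_apply Lphi.
have -> : \tr (L *m L *m P) = (adjm (L *m phi) *m (L *m phi)) 0 0.
  by rewrite mulmxA mxtrace_mulC adjmM Lh !mulmxA /mxtrace big_ord1.
rewrite Lphi adjmZ -scalemxAl -scalemxAr scalerA norm2_centered //.
have -> : (2%:R * 'i%C)^* * (2%:R * 'i%C) = 4%:R :> C by apply: complex_ext => /=; ring.
rewrite [LHS]mxE [((_ - _ : 'M[C]_1) 0 0)]mxE [((- _ : 'M[C]_1) 0 0)]mxE.
by rewrite [(m *m m) 0 0]mxE big_ord1 expr2.
Qed.
End PureState.
End PureStateSLD.

Section UnitaryFamily.
Variable R : realType.
Local Notation C := R[i].
Variable k : nat.
Implicit Types (theta : 'I_k -> R) (psi : 'cV[C]_k).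

Lemma sum_shift theta j t (f : 'I_k -> R) :
  \sum_l Defs.shift theta j t l * f l = \sum_l theta l * f l + t * f j.
Proof.
rewrite /Defs.shift; under eq_bigr => l _ do rewrite mulrDl.
rewrite big_split /=; congr (_ + _).
by rewrite (bigD1 j) //= eqxx big1 ?addr0 // => l /negPf ->; rewrite mul0r.
Qed.

Lemma sum_abs2_unit psi : adjm psi *m psi = 1%:M -> \sum_a abs2 (psi a 0) = 1.
Proof.
move=> /matrixP/(_ 0 0); rewrite !mxE eqxx mulr1n => psi_unit.
apply: (@complexI R); rewrite realC_sum; apply: etrans psi_unit.
by apply: eq_bigr => a _; rewrite abs2E adjmE.
Qed.

Lemma sum_abs2_sqr_le1 psi : adjm psi *m psi = 1%:M ->
  \sum_a abs2 (psi a 0) ^+ 2 <= 1.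
Proof.
move=> /sum_abs2_unit w1; rewrite -[leRHS]w1; apply: ler_sum => a _.
have w_le1 : abs2 (psi a 0) <= 1.
  by rewrite -w1 (bigD1 a) //= lerDl sumr_ge0 // => b _; exact: abs2_ge0.
by rewrite expr2 ler_piMr ?abs2_ge0.
Qed.

Variable Z : 'I_k -> 'M[C]_k.
Local Notation z j a := (complex.Re (Z j a a)).

Lemma Uth_apply theta psi a :
  (Uth Z theta *m psi) a 0 = phase (\sum_j theta j * z j a) * psi a 0.
Proof. by rewrite mul_diag_mx !mxE. Qed.

Lemma Uth_unitary theta : adjm (Uth Z theta) *m Uth Z theta = 1%:M.
Proof.
rewrite adjm_diag mulmx_diag; apply/matrixP => a b; rewrite !mxE.
by rewrite phaseJ_mul.
Qed.

Lemma Uth_unit_vector theta psi : adjm psi *m psi = 1%:M ->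
  adjm (Uth Z theta *m psi) *m (Uth Z theta *m psi) = 1%:M.
Proof.
by move=> psi_unit; rewrite adjmM -mulmxA (mulmxA (adjm (Uth Z theta))) Uth_unitary mul1mx.
Qed.

Lemma familyE theta psi :
  Defs.family Z psi theta = (Uth Z theta *m psi) *m adjm (Uth Z theta *m psi).
Proof. by rewrite /Defs.family adjmM !mulmxA. Qed.

Lemma family_entry theta psi a b :
  Defs.family Z psi theta a b =
    phase (\sum_j theta j * z j a - \sum_j theta j * z j b) * (psi a 0 * (psi b 0)^*).
Proof.
rewrite familyE mxE big_ord1 adjmE !Uth_apply conjCM phaseJ phaseD.
by rewrite mulrACA.
Qed.

Lemma mx_expect_Uth_diag theta psi (r : 'I_k -> R) :
  mx_expect (Uth Z theta *m psi) (diag_mx (\row_a ((r a)%:C)%C)) 0 0 =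
    ((\sum_a r a * abs2 (psi a 0))%:C)%C.
Proof.
rewrite /mx_expect mxE realC_sum; apply: eq_bigr => a _.
rewrite adjmE Uth_apply (mul_diag_mx (\row_b ((r b)%:C)%C)).
rewrite [X in _ * X]mxE Uth_apply mxE conjCM realCM abs2E.
have := phaseJ_mul (\sum_j theta j * z j a).
set u := phase _ => uu; rewrite -[RHS]mulr1 -uu; ring.
Qed.

End UnitaryFamily.

Section FamilyQFI.
Variable R : realType.
Local Notation C := R[i].
Variables (k : nat) (Z : 'I_k -> 'M[C]_k).
Hypothesis Z_diag : forall j, is_diag_mx (Z j).
Hypothesis Z_herm : forall j, herm_mx (Z j).
Local Notation z j a := (complex.Re (Z j a a)).
Local Notation Zdiag j := (herm_diag_mxE (Z_diag j) (Z_herm j)).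
Local Notation angle theta a := (\sum_l theta l * z l a).
Implicit Types (theta : 'I_k -> R) (psi : 'cV[C]_k).

Lemma is_pderiv_family psi theta j :
  is_pderiv (Defs.family Z psi) theta j (icomm (Z j) (Defs.family Z psi theta)).
Proof.
move=> a b.
have fam_line t : Defs.family Z psi (Defs.shift theta j t) a b =
    phase (angle theta a - angle theta b + t * (z j a - z j b)) * (psi a 0 * (psi b 0)^*).
  by rewrite family_entry !sum_shift; congr (phase _ * _); ring.
have [dRe dIm] := is_derive_phase_line fam_line.
suff -> : icomm (Z j) (Defs.family Z psi theta) a b =
    'i%C * ((z j a - z j b)%:C)%C * phase (angle theta a - angle theta b) *
    (psi a 0 * (psi b 0)^*) by [].
rewrite [in LHS](Zdiag j) mxE commutator_diag_entry family_entry !mxE realCB; ring.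
Qed.

Lemma is_pderiv_unique (fam : ('I_k -> R) -> 'M[C]_k) theta j D1 D2 :
  is_pderiv fam theta j D1 -> is_pderiv fam theta j D2 -> D1 = D2.
Proof.
move=> D1P D2P; apply/matrixP => a b.
have [Re1 Im1] := D1P a b; have [Re2 Im2] := D2P a b.
apply: complex_ext.
  by rewrite -(@derive_val _ _ _ _ _ _ _ Re1) (@derive_val _ _ _ _ _ _ _ Re2).
by rewrite -(@derive_val _ _ _ _ _ _ _ Im1) (@derive_val _ _ _ _ _ _ _ Im2).
Qed.

Lemma family_herm psi theta : herm_mx (Defs.family Z psi theta).
Proof. by rewrite /herm_mx familyE adjmM adjmK. Qed.

Lemma family_idem psi theta : adjm psi *m psi = 1%:M ->
  Defs.family Z psi theta *m Defs.family Z psi theta = Defs.family Z psi theta.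
Proof.
move=> /(Uth_unit_vector Z theta) v_unit.
by rewrite familyE mulmxA -(mulmxA (Uth Z theta *m psi)) v_unit mulmx1.
Qed.

Lemma is_SLD_family psi theta j : adjm psi *m psi = 1%:M ->
  is_SLD (Defs.family Z psi) theta j
    ((2%:R : C) *: icomm (Z j) (Defs.family Z psi theta)).
Proof.
move=> psi_unit; split; first exact: sld_commutator_herm (Z_herm j) (family_herm psi theta).
exists (icomm (Z j) (Defs.family Z psi theta)); split; first exact: is_pderiv_family.
exact: sld_commutator_idem (family_idem theta psi_unit).
Qed.

Lemma tr_sld_family psi theta j L : adjm psi *m psi = 1%:M ->
  is_SLD (Defs.family Z psi) theta j L ->
  complex.Re (\tr (L *m L *m Defs.family Z psi theta)) =
    4%:R * weighted_variance (fun a => abs2 (psi a 0)) (fun a => z j a).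
Proof.
move=> psi_unit [Lh [D [DP Dsld]]].
have := is_pderiv_unique (is_pderiv_family psi theta j) DP; rewrite Dsld familyE => sld.
rewrite (tr_sld_pure (Uth_unit_vector Z theta psi_unit) (Z_herm j) Lh sld).
rewrite [in LHS](Zdiag j) mulmx_diag.
have -> : \row_a ((\row_b ((z j b)%:C)%C) 0 a * (\row_b ((z j b)%:C)%C) 0 a) =
    \row_a (((z j a ^+ 2)%:C)%C) :> 'rV[C]_k.
  by apply/rowP => a; rewrite !mxE -realCM expr2.
rewrite !mx_expect_Uth_diag /weighted_variance; move: (\sum_a _) (\sum_a _) => X Y.
by rewrite !expr2 /=; ring.
Qed.

Lemma diag_orthonormal : (forall j l, \tr (Z j *m Z l) = (j == l)%:R) ->
  forall j l, \sum_a z j a * z l a = (j == l)%:R.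
Proof.
move=> Zorth j l; apply: (@complexI R).
rewrite realC_sum (_ : (((j == l)%:R)%:C)%C = (j == l)%:R); last by case: (j == l).
rewrite -Zorth [in RHS](Zdiag j) [in RHS](Zdiag l) mulmx_diag mxtrace_diag.
by apply: eq_bigr => a _; rewrite !mxE realCM.
Qed.

Lemma mean_qfi_family psi theta v : adjm psi *m psi = 1%:M ->
  (forall j l, \tr (Z j *m Z l) = (j == l)%:R) ->
  mean_qfi_is (Defs.family Z psi) theta v <->
  v = 4%:R / k%:R * (1 - \sum_a abs2 (psi a 0) ^+ 2).
Proof.
move=> psi_unit Zorth.
have qfi_tr L : (forall j, is_SLD (Defs.family Z psi) theta j (L j)) ->
    \tr (qfi_matrix (Defs.family Z psi) theta L) =
    4%:R * (1 - \sum_a abs2 (psi a 0) ^+ 2).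
  move=> LP; rewrite /mxtrace.
  under eq_bigr => j _ do rewrite mxE (tr_sld_family psi_unit (LP j)).
  rewrite -mulr_sumr sum_weighted_variance_orthonormal; last exact: diag_orthonormal.
  by congr (_ * (_ - _)); exact: sum_abs2_unit.
split => [[L [LP ->]] | ->]; first by rewrite qfi_tr // mulrAC.
have LP j : is_SLD (Defs.family Z psi) theta j
    ((2%:R : C) *: icomm (Z j) (Defs.family Z psi theta)) by exact: is_SLD_family.
exists (fun j => (2%:R : C) *: icomm (Z j) (Defs.family Z psi theta)).
by rewrite qfi_tr // mulrAC.
Qed.

End FamilyQFI.

Section Ensembles.
Variable R : realType.
Local Notation C := R[i].
Variable k : nat.
Local Open Scope classical_set_scope.

Lemma state_dim_gt0 (rho : 'M[C]_k) : is_state rho -> (0 < k)%N.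
Proof.
case=> _ _; case: k rho => // rho; rewrite /mxtrace big_ord0 => /eqP.
by rewrite eq_sym oner_eq0.
Qed.

Lemma normalmx_rank1_decomposition (A : 'M[C]_k) : A \is normalmx ->
  exists (d : 'I_k -> C) (psi : 'I_k -> 'cV[C]_k),
    [/\ forall l, adjm (psi l) *m psi l = 1%:M,
        forall l, d l = mx_expect (psi l) A 0 0 &
        A = \sum_l d l *: (psi l *m adjm (psi l))].
Proof.
move=> /orthomx_spectralP; set P := spectralmx A; set d := spectral_diag A.
have P_unitary : P \is unitarymx := spectral_unitarymx A.
have PPt : P *m adjm P = 1%:M by apply/unitarymxP.
rewrite invmx_unitary // => AE.
(* The eigenvectors are the conjugate transposed rows of the unitary P. *)
exists (fun l => d 0 l), (fun l => adjm (row l P)); split => [l | l |].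
- have /matrixP/(_ l l) := PPt; rewrite [1%:M l l]mxE eqxx mulr1n => Pll.
  apply/matrixP => i j; rewrite !ord1 [1%:M 0 0]mxE mulr1n adjmK -Pll !mxE.
  by apply: eq_bigr => b _; rewrite !mxE.
- have : P *m A *m adjm P = diag_mx d.
    by rewrite [in LHS]AE !mulmxA PPt mul1mx -mulmxA PPt mulmx1.
  move=> /matrixP/(_ l l); rewrite [diag_mx d l l]mxE eqxx mulr1n => <-.
  rewrite /mx_expect mulmxA adjmK !mxE; apply: eq_bigr => j _; rewrite !mxE; congr (_ * _).
  by apply: eq_bigr => i _; rewrite !mxE.
- rewrite [LHS]AE; apply/matrixP => a b.
  rewrite mul_mx_diag summxE mxE; apply: eq_bigr => l _.
  by rewrite !mxE big_ord1 !mxE conjCK mulrCA mulrA.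
Qed.

Lemma state_has_ensemble (rho : 'M[C]_k) : is_state rho ->
  exists (p : 'I_k -> R) (psi : 'I_k -> 'cV[C]_k), ensemble rho p psi.
Proof.
case=> rho_herm rho_psd rho_tr.
have /normalmx_rank1_decomposition [d [psi [psi_unit dE rhoE]]] : rho \is normalmx.
  by apply/normalmxP; rewrite (rho_herm : map_mx Num.conj rho^T = rho).
have d_ge0 l : 0 <= d l by rewrite dE /mx_expect mulmxA; exact: rho_psd.
have dR l : d l = ((complex.Re (d l))%:C)%C.
  by move: (d_ge0 l); rewrite lecE; case: (d l) => x y /= /andP[/eqP -> _].
exists (fun l => complex.Re (d l)), psi; split => //.
- by move=> l; move: (d_ge0 l); rewrite lecE => /andP[].
- apply: (@complexI R); rewrite realC_sum; apply: (etrans _ rho_tr).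
  rewrite [in RHS]rhoE raddf_sum; apply: eq_bigr => l _ /=.
  by rewrite mxtraceZ mxtrace_mulC psi_unit mxtrace1 mulr1 -dR.
- by rewrite [LHS]rhoE; apply: eq_bigr => l _; rewrite -dR.
Qed.

Lemma ipr_values_neq0 (rho : 'M[C]_k) : is_state rho -> ipr_values rho !=set0.
Proof.
move=> /state_has_ensemble [p [psi ens]].
by exists (\sum_l p l * \sum_a abs2 (psi l a 0) ^+ 2), k, p, psi.
Qed.

Lemma ipr_values_le1 (rho : 'M[C]_k) : ubound (ipr_values rho) 1.
Proof.
move=> _ [m [p [psi [[p_ge0 p1 psi_unit _] ->]]]].
rewrite -p1; apply: ler_sum => l _.
by rewrite -[leRHS]mulr1 ler_wpM2l // sum_abs2_sqr_le1.
Qed.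

End Ensembles.

Section AffineExtremum.
Variable R : realType.
Local Open Scope classical_set_scope.

Lemma convex_sum_affine m (p x : 'I_m -> R) (K c : R) : \sum_l p l = 1 ->
  \sum_l p l * (K * (c - x l)) = K * (c - \sum_l p l * x l).
Proof.
move=> p1; transitivity (\sum_l K * (p l * c - p l * x l)).
  by apply: eq_bigr => l _; ring.
by rewrite -mulr_sumr sumrB -mulr_suml p1 mul1r.
Qed.

Lemma inf_mul_sub_sup (S : set R) (K c : R) : 0 < K -> S !=set0 -> has_ubound S ->
  inf [set K * (c - y) | y in S] = K * (c - sup S).
Proof.
move=> K_gt0 S0 S_ub; set T := [set _ | _ in S].
have T0 : T !=set0 by case: S0 => y Sy; exists (K * (c - y)), y.
have T_lb : lbound T (K * (c - sup S)).
  move=> _ [y Sy <-]; rewrite ler_pM2l // lerD2l lerN2.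
  by apply: sup_upper_bound => //; split.
apply/le_anti/andP; split; last exact: lb_le_inf.
have infT_le y : S y -> inf T <= K * (c - y).
  by move=> Sy; apply: ge_inf; [exists (K * (c - sup S)) | exists y].
have divK u : (inf T / K <= u) = (inf T <= K * u) by rewrite ler_pdivrMr // mulrC.
suff : sup S <= c - inf T / K by rewrite -divK => ?; lra.
by apply: ge_sup => // y /infT_le; rewrite -divK => ?; lra.
Qed.

End AffineExtremum.

Lemma qfi_valuesE (R : realType) (n : nat) (Z : 'I_n -> 'M[R[i]]_n)
    (theta : 'I_n -> R) (rho : 'M[R[i]]_n) :
  (forall j, is_diag_mx (Z j)) -> (forall j, herm_mx (Z j)) ->
  (forall j k, \tr (Z j *m Z k) = (j == k)%:R) ->
  qfi_values Z theta rho = [set 4%:R / n%:R * (1 - y) | y in ipr_values rho]%classic.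
Proof.
move=> Z_diag Z_herm Z_orth; apply/seteqP; split.
- move=> _ [m [p [psi [ens [v [vP ->]]]]]]; have [_ p1 psi_unit _] := ens.
  exists (\sum_l p l * \sum_a abs2 (psi l a 0) ^+ 2); first by exists m, p, psi.
  rewrite -convex_sum_affine //; apply: eq_bigr => l _; congr (_ * _).
  by apply/esym/(mean_qfi_family Z_diag Z_herm theta (v l) (psi_unit l) Z_orth).
- move=> _ [y [m [p [psi [ens ->]]]] <-]; have [_ p1 psi_unit _] := ens.
  exists m, p, psi; split => //.
  exists (fun l => 4%:R / n%:R * (1 - \sum_a abs2 (psi l a 0) ^+ 2)).
  split; last by rewrite convex_sum_affine.
  by move=> l; apply/(mean_qfi_family Z_diag Z_herm theta _ (psi_unit l) Z_orth).
Qed.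

Theorem mainTheorem5 (R : realType) (n : nat) (Z : 'I_n -> 'M[R[i]]_n)
    (theta : 'I_n -> R) (rho : 'M[R[i]]_n) :
  (forall j, is_diag_mx (Z j)) ->
  (forall j, herm_mx (Z j)) ->
  (forall j k, \tr (Z j *m Z k) = (j == k)%:R) ->
  is_state rho ->
  Ccoh Z theta rho = 4%:R / n%:R * (1 - sup (ipr_values rho)).
Proof.
move=> Z_diag Z_herm Z_orth rho_state.
rewrite /Ccoh (qfi_valuesE theta rho Z_diag Z_herm Z_orth) inf_mul_sub_sup //.
- by rewrite divr_gt0 ?ltr0n ?(state_dim_gt0 rho_state).
- exact: ipr_values_neq0.
- by exists 1; exact: ipr_values_le1.
Qed.
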